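(* Let $f_\theta$ be a neural network parameterized by $\theta$, with $\theta_l$ the parameters of its $l$-th layer, and let $\mathrm{DB\text{-}MLP}^l$ be its $l$-th doubly biased MLP block with input $X^{l-1}$ and zeroth bias $D^l$. Then for any sample $(x,y)$, \[ \|\nabla_{\theta_l}\mathcal{L}_{\mathrm{CE}}(\theta,(x,y))\|_2^2\ \ge\ \|\nabla_{X^{l-1}}\mathcal{L}_{\mathrm{CE}}(\theta,(x,y))\|_2^2+\|H^l(X^{l-1}+D^l)^\top\|_2^2+\|G_V^l(A^l)^\top\|_2^2 . \] If the block is not doubly biased, the first term on the right-hand side disappears.
   Context: $\mathcal{L}_{\mathrm{CE}}(\theta,(x,y))=-\log f(y\mid\theta,x)$ is the Cross-Entropy loss. The DB-MLP block receives $X^{l-1}\in\mathbb{R}^{d\times k}$ (tokens as columns), has zeroth bias $D^l\in\mathbb{R}^{d\times k}$, key matrix $K^l\in\mathbb{R}^{n\times d}$, key bias $b_K^l$, value matrix $V^l\in\mathbb{R}^{d\times n}$, value bias $b_V^l$, computes $A^l=\sigma(K^l(X^{l-1}+D^l)+b_K^l\mathbf1^\top)$ and $Z^l=V^lA^l+b_V^l\mathbf1^\top$ (entrywise activation $\sigma$), and $X^{l-1}$ is used only through $X^{l-1}+D^l$ (the block's first operation). The parameters $\theta_l$ include at least $K^l,V^l,D^l$. $\Gamma^l=\sigma'(K^l(X^{l-1}+D^l)+b_K^l\mathbf1^\top)$ entrywise, $G_K^l=\partial\mathcal{L}_{\mathrm{CE}}/\partial A^l$, $G_V^l=\partial\mathcal{L}_{\mathrm{CE}}/\partial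 Z^l$, $H^l=G_K^l\odot\Gamma^l$ (Hadamard product). Matrix norms are Frobenius norms. *)

From HB Require Import structures.
From mathcomp Require Import all_boot all_order all_algebra.
From mathcomp Require Import all_classical all_reals all_analysis.
Set Implicit Arguments. Unset Strict Implicit. Unset Printing Implicit Defensive.
Import Order.TTheory GRing.Theory Num.Theory.
Import numFieldNormedType.Exports.
Local Open Scope ring_scope.

Section DBMLP.
Variable R : realType.

Definition frob2 m n (M : 'M[R]_(m, n)) : R := \sum_i \sum_j (M i j) ^+ 2.

Definition mgrad m n (F : 'M[R]_(m, n) -> R) (P : 'M[R]_(m, n)) : 'M[R]_(m, n) :=
  \matrix_(i, j) derive1 (fun t : R => F (P + t *: delta_mx i j)) 0.

Definition hadamard m n (A B : 'M[R]_(m, n)) : 'M[R]_(m, n) := map2_mx *%R A B.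

Definition ones k : 'rV[R]_k := const_mx 1.

Variables (d k n p : nat).

Definition db_pre (K : 'M[R]_(n, d)) (bK : 'cV[R]_n) (X D : 'M[R]_(d, k)) : 'M[R]_(n, k) :=
  K *m (X + D) + bK *m ones k.
Definition db_act (sigma : R -> R) K bK (X D : 'M[R]_(d, k)) : 'M[R]_(n, k) :=
  map_mx sigma (db_pre K bK X D).
Definition db_outA (V : 'M[R]_(d, n)) (bV : 'cV[R]_d) (A : 'M[R]_(n, k)) : 'M[R]_(d, k) :=
  V *m A + bV *m ones k.
Definition db_out sigma K bK V bV (X D : 'M[R]_(d, k)) : 'M[R]_(d, k) :=
  db_outA V bV (db_act sigma K bK X D).

(* The rest of the network (residual branch using X+D, later layers, softmax,
   the remaining layer parameters rho) is an arbitrary function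
   f : (X+D, Z, rho) |-> f(y | theta, x) > 0.  Cross-entropy loss: *)
Definition CEloss (f : ('M[R]_(d, k) * 'M[R]_(d, k)) * 'rV[R]_p -> R)
  sigma X D K bK V bV (rho : 'rV[R]_p) : R :=
  - ln (f ((X + D, db_out sigma K bK V bV X D), rho)).

End DBMLP.

(* By the chain rule, the gradients of the loss with respect to V and K are
   G_V A^T and (G_K o Gamma) (X + D)^T, where o is the Hadamard product.
   Since X and D enter the loss only through X + D, the gradient with respect
   to the zeroth bias D equals the gradient with respect to the input X.  The
   inequality then follows by dropping the nonnegative squared norms of the
   remaining gradients. *)

Set Warnings "-notation-overridden,-ambiguous-paths,-notation-incompatible-prefix,-deprecated".
From HB Require Import structures.
From mathcomp Require Import all_boot all_order all_algebra.
From mathcomp Require Import all_classical all_reals all_analysis.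
From mathcomp Require Import ring lra.
Set Implicit Arguments.
Unset Strict Implicit.
Unset Printing Implicit Defensive.
Import Order.TTheory GRing.Theory Num.Theory.
Import numFieldNormedType.Exports.
Local Open Scope ring_scope.

Section GradientCalculus.
Variable R : realType.

Lemma differentiable_neg_ln (U : normedModType R) (u : U -> R) x :
  0 < u x -> differentiable u x -> differentiable (fun y => - ln (u y)) x.
Proof.
move=> ux_gt0 du; apply: differentiableN; apply: differentiable_comp => //.
by apply/derivable1_diffP; case: (is_derive1_ln ux_gt0).
Qed.

Lemma linear_mx_sum_delta m n (W : lmodType R) (l : {linear 'M[R]_(m, n) -> W})
    (M : 'M[R]_(m, n)) :
  l M = \sum_i \sum_j M i j *: l (delta_mx i j).
Proof.
rewrite {1}(matrix_sum_delta M) linear_sum; apply: eq_bigr => i _.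
by rewrite linear_sum; apply: eq_bigr => j _; rewrite linearZ.
Qed.

Lemma linear_mx_differentiable m n (W : normedModType R)
    (l : {linear 'M[R]_(m, n) -> W}) (M : 'M[R]_(m, n)) :
  differentiable l M.
Proof.
have -> : (l : _ -> _) = \sum_i \sum_j (fun N : 'M[R]_(m, n) => N i j *: l (delta_mx i j)).
  apply: funext => N; rewrite linear_mx_sum_delta fct_sumE.
  by apply: eq_bigr => i _; rewrite fct_sumE.
apply: differentiable_sum => i; apply: differentiable_sum => j.
exact/differentiableZl/differentiable_coord.
Qed.

Lemma derive1_along_diff (U W : normedModType R) (g : U -> W) (P M : U) :
  differentiable g P -> derive1 (fun t : R => g (P + t *: M)) 0 = 'd g P M.
Proof.
move=> dg; rewrite -deriveE // /derive1 /derive.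
suff -> : (fun h : R => h^-1 *: (g (P + (h + 0) *: M) - g (P + 0 *: M))) =
  (fun h => h^-1 *: (g (h *: M + P) - g P)) by [].
by apply: funext => h; rewrite addr0 scale0r addr0 [P + _]addrC.
Qed.

Lemma diff_mgradE m n (g : 'M[R]_(m, n) -> R) (P M : 'M[R]_(m, n)) :
  differentiable g P -> 'd g P M = \sum_i \sum_j M i j * mgrad g P i j.
Proof.
move=> dg; rewrite linear_mx_sum_delta.
by apply: eq_bigr => i _; apply: eq_bigr => j _; rewrite mxE derive1_along_diff.
Qed.

Lemma derive1_comp_mx m n (g : 'M[R]_(m, n) -> R) (c : R -> 'M[R]_(m, n))
    (c' : 'M[R]_(m, n)) :
  (forall i j, is_derive (0 : R) 1 (fun t => c t i j) (c' i j)) ->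
  differentiable g (c 0) ->
  derive1 (fun t => g (c t)) 0 = \sum_i \sum_j c' i j * mgrad g (c 0) i j.
Proof.
move=> dc dg.
have /derivable1_diffP Dc : derivable c 0 1.
  by apply/derivable_mxP => i j; case: (dc i j).
have c'E : 'd c 0 1 = c'.
  rewrite -deriveE // derive_mx; last exact/derivable1_diffP.
  by apply/matrixP => i j; rewrite mxE; case: (dc i j).
rewrite (@derive1E' _ _ (g \o c)); last exact: differentiable_comp.
by rewrite diff_comp //= c'E diff_mgradE.
Qed.

Lemma sum_mul_delta_mx a b c (i : 'I_a) (j : 'I_b) (B : 'M[R]_(b, c))
    (F : 'I_a -> 'I_c -> R) :
  \sum_a' \sum_c' (delta_mx i j *m B) a' c' * F a' c' = \sum_c' B j c' * F i c'.
Proof.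
have deltaBE a' c' : (delta_mx i j *m B) a' c' = (a' == i)%:R * B j c'.
  rewrite !mxE (bigD1 j) //= mxE eqxx andbT big1 ?addr0 // => l /negbTE nlj.
  by rewrite mxE nlj andbF mul0r.
rewrite (bigD1 i) //= [X in _ + X]big1 ?addr0 => [|a' nai].
  by apply: eq_bigr => c' _; rewrite deltaBE eqxx mul1r.
by apply: big1 => c' _; rewrite deltaBE (negbTE nai) !mul0r.
Qed.

Lemma is_derive_comp_affine (s : R -> R) (a b : R) :
  derivable s a 1 -> is_derive (0 : R) 1 (fun t => s (a + t * b)) (derive1 s a * b).
Proof.
move=> ds.
have du : is_derive (0 : R) 1 (fun t : R => a + t * b) b.
  by apply: is_derive_eq; rewrite add0r mul1r scale0r add0r; exact: mulr1.
have du1 : derivable (fun t : R => a + t * b) 0 1 by case: du.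
have ds0 : derivable s ((fun t : R => a + t * b) 0) 1 by rewrite /= mul0r addr0.
apply: DeriveDef.
  by apply/derivable1_diffP; apply: differentiable_comp; apply/derivable1_diffP.
rewrite -derive1E (derive1_comp du1 ds0) /= mul0r addr0 [X in _ * X]derive1E.
(* [done] would spend minutes unifying two instance paths of the ring R. *)
by rewrite (@derive_val _ _ _ _ _ _ _ du); reflexivity.
Qed.

Lemma mgrad_mulmxr m n q (g : 'M[R]_(m, q) -> R) (B : 'M[R]_(n, q))
    (C : 'M[R]_(m, q)) (P : 'M[R]_(m, n)) :
  differentiable g (P *m B + C) ->
  mgrad (fun M => g (M *m B + C)) P = mgrad g (P *m B + C) *m B^T.
Proof.
move=> dg; apply/matrixP => i j; rewrite !mxE.
have -> : (fun t : R => g ((P + t *: delta_mx i j) *m B + C)) =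
    (fun t => g (P *m B + C + t *: (delta_mx i j *m B))).
  by apply: funext => t; rewrite mulmxDl addrAC scalemxAl.
rewrite derive1_along_diff // diff_mgradE // sum_mul_delta_mx.
by apply: eq_bigr => l _; rewrite [B^T _ _]mxE mulrC.
Qed.

Lemma mgrad_map_mx_mulmxr m n q (s : R -> R) (g : 'M[R]_(m, q) -> R)
    (B : 'M[R]_(n, q)) (C : 'M[R]_(m, q)) (P : 'M[R]_(m, n)) :
  (forall x, derivable s x 1) ->
  differentiable g (map_mx s (P *m B + C)) ->
  mgrad (fun M => g (map_mx s (M *m B + C))) P =
  hadamard (mgrad g (map_mx s (P *m B + C))) (map_mx (derive1 s) (P *m B + C)) *m B^T.
Proof.
move=> ds dg; apply/matrixP => i j; rewrite !mxE.
set Q := P *m B + C; set N := delta_mx i j *m B.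
have -> : (fun t : R => g (map_mx s ((P + t *: delta_mx i j) *m B + C))) =
    (fun t => g (map_mx s (Q + t *: N))).
  by apply: funext => t; rewrite mulmxDl addrAC scalemxAl.
pose dc : 'M[R]_(m, q) := \matrix_(a, b) (derive1 s (Q a b) * N a b).
have dentry a b : is_derive (0 : R) 1 (fun t => map_mx s (Q + t *: N) a b) (dc a b).
  have -> : (fun t => map_mx s (Q + t *: N) a b) = (fun t => s (Q a b + t * N a b)).
    by apply: funext => t; rewrite mxE [(Q + _) a b]mxE [(t *: N) a b]mxE.
  by rewrite [dc a b]mxE; apply: is_derive_comp_affine.
rewrite (derive1_comp_mx dentry) scale0r addr0 //.
under eq_bigr do under eq_bigr do rewrite mxE -mulrA mulrCA.
rewrite /N sum_mul_delta_mx; apply: eq_bigr => l _; rewrite !mxE; ring.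
Qed.

Lemma mgrad_addl_addr m n (F : 'M[R]_(m, n) -> R) (X D : 'M[R]_(m, n)) :
  mgrad (fun D' => F (X + D')) D = mgrad (fun X' => F (X' + D)) X.
Proof.
apply/matrixP => i j; rewrite !mxE; congr (derive1 _ 0); apply: funext => t.
by rewrite addrA addrAC.
Qed.

Lemma frob2_ge0 m n (M : 'M[R]_(m, n)) : 0 <= frob2 M.
Proof. by apply: sumr_ge0 => i _; apply: sumr_ge0 => j _; apply: sqr_ge0. Qed.

End GradientCalculus.

Section DoublyBiasedMLP.
Variables (R : realType) (d k n p : nat) (sigma : R -> R)
  (f : ('M[R]_(d, k) * 'M[R]_(d, k)) * 'rV[R]_p -> R).
Hypotheses (hsigma : forall t : R, derivable sigma t 1)
  (hfdiff : forall q, differentiable f q) (hfpos : forall q, 0 < f q).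
Variables (X D : 'M[R]_(d, k)) (K : 'M[R]_(n, d)) (bK : 'cV[R]_n)
  (V : 'M[R]_(d, n)) (bV : 'cV[R]_d) (rho : 'rV[R]_p).

Lemma differentiable_db_outA (A : 'M[R]_(n, k)) : differentiable (db_outA V bV) A.
Proof.
apply: differentiableD; last exact: differentiable_cst.
exact: linear_mx_differentiable (mulmx V) A.
Qed.

Lemma differentiable_loss_out (Z0 : 'M[R]_(d, k)) :
  differentiable (fun Z => - ln (f ((X + D, Z), rho))) Z0.
Proof.
apply: differentiable_neg_ln => //; apply: differentiable_comp => //.
apply: differentiable_pair; last exact: differentiable_cst.
by apply: differentiable_pair; [exact: differentiable_cst | exact: ex_diff].
Qed.

Lemma CEloss_mgradV :
  mgrad (fun V' => CEloss f sigma X D K bK V' bV rho) V =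
  mgrad (fun Z => - ln (f ((X + D, Z), rho))) (db_out sigma K bK V bV X D)
    *m (db_act sigma K bK X D)^T.
Proof. exact: mgrad_mulmxr (differentiable_loss_out _). Qed.

Lemma CEloss_mgradK :
  mgrad (fun K' => CEloss f sigma X D K' bK V bV rho) K =
  hadamard (mgrad (fun A => - ln (f ((X + D, db_outA V bV A), rho)))
                  (db_act sigma K bK X D))
           (map_mx (derive1 sigma) (db_pre K bK X D)) *m (X + D)^T.
Proof.
apply: (mgrad_map_mx_mulmxr
  (g := fun A => - ln (f ((X + D, db_outA V bV A), rho))) (C := bK *m ones R k)) => //.
exact: differentiable_comp (differentiable_db_outA _) (differentiable_loss_out _).
Qed.

Lemma CEloss_mgradD :
  mgrad (fun D' => CEloss f sigma X D' K bK V bV rho) D =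
  mgrad (fun X' => CEloss f sigma X' D K bK V bV rho) X.
Proof.
exact: (mgrad_addl_addr (fun Y => - ln (f ((Y,
  db_outA V bV (map_mx sigma (K *m Y + bK *m ones R k))), rho)))).
Qed.

End DoublyBiasedMLP.

Theorem mainTheorem8 (R : realType) (d k n p : nat)
  (sigma : R -> R) (f : ('M[R]_(d, k) * 'M[R]_(d, k)) * 'rV[R]_p -> R)
  (hsigma : forall t : R, derivable sigma t 1)
  (hfdiff : forall q, differentiable f q)
  (hfpos : forall q, 0 < f q)
  (X : 'M[R]_(d, k)) (K : 'M[R]_(n, d)) (bK : 'cV[R]_n)
  (V : 'M[R]_(d, n)) (bV : 'cV[R]_d) (rho : 'rV[R]_p) :
  (* doubly biased block, zeroth bias D is a parameter *)
  (forall D : 'M[R]_(d, k),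
    let L := CEloss f sigma in
    let A := db_act sigma K bK X D in
    let G_V := mgrad (fun Z => - ln (f ((X + D, Z), rho))) (db_out sigma K bK V bV X D) in
    let G_K := mgrad (fun A' => - ln (f ((X + D, db_outA V bV A'), rho))) A in
    let Gamma := map_mx (derive1 sigma) (db_pre K bK X D) in
    let H := hadamard G_K Gamma in
    frob2 (mgrad (fun K' => L X D K' bK V bV rho) K)
    + frob2 (mgrad (fun bK' => L X D K bK' V bV rho) bK)
    + frob2 (mgrad (fun V' => L X D K bK V' bV rho) V)
    + frob2 (mgrad (fun bV' => L X D K bK V bV' rho) bV)
    + frob2 (mgrad (fun D' => L X D' K bK V bV rho) D)
    + frob2 (mgrad (fun rho' => L X D K bK V bV rho') rho)
    >= frob2 (mgrad (fun X' => L X' D K bK V bV rho) X)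
       + frob2 (H *m (X + D)^T) + frob2 (G_V *m A^T))
  /\
  (* block not doubly biased: no zeroth bias (D = 0, not a parameter) *)
  (let L := CEloss f sigma in
   let D := (0 : 'M[R]_(d, k)) in
   let A := db_act sigma K bK X D in
   let G_V := mgrad (fun Z => - ln (f ((X + D, Z), rho))) (db_out sigma K bK V bV X D) in
   let G_K := mgrad (fun A' => - ln (f ((X + D, db_outA V bV A'), rho))) A in
   let Gamma := map_mx (derive1 sigma) (db_pre K bK X D) in
   let H := hadamard G_K Gamma in
   frob2 (mgrad (fun K' => L X D K' bK V bV rho) K)
   + frob2 (mgrad (fun bK' => L X D K bK' V bV rho) bK)
   + frob2 (mgrad (fun V' => L X D K bK V' bV rho) V)
   + frob2 (mgrad (fun bV' => L X D K bK V bV' rho) bV)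
   + frob2 (mgrad (fun rho' => L X D K bK V bV rho') rho)
   >= frob2 (H *m (X + D)^T) + frob2 (G_V *m A^T)).
Proof.
split=> [D|] /=.
- rewrite CEloss_mgradK // CEloss_mgradV // CEloss_mgradD.
  have := frob2_ge0 (mgrad (fun bK' => CEloss f sigma X D K bK' V bV rho) bK).
  have := frob2_ge0 (mgrad (fun bV' => CEloss f sigma X D K bK V bV' rho) bV).
  have := frob2_ge0 (mgrad (fun rho' => CEloss f sigma X D K bK V bV rho') rho).
  lra.
- rewrite CEloss_mgradK // CEloss_mgradV //.
  have := frob2_ge0 (mgrad (fun bK' => CEloss f sigma X 0 K bK' V bV rho) bK).
  have := frob2_ge0 (mgrad (fun bV' => CEloss f sigma X 0 K bK V bV' rho) bV).
  have := frob2_ge0 (mgrad (fun rho' => CEloss f sigma X 0 K bK V bV rho') rho).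
  lra.
Qed.
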